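(* Assume (A1)–(A4) and let $b\in\mathcal H$ be consistent. Then the optimization problem $$\min\{ f(Wx) : x\in\mathscr D(W),\ Ax=b\}$$ admits a unique solution $x^*\in\mathscr D(W)$, and it satisfies $Wx^*\in\mathscr D(f)$.
   Context: $\mathcal X,\mathcal Y,\mathcal H$ are real Hilbert spaces. Standing assumptions: (A1) $A:\mathcal X\to\mathcal H$ is a bounded linear operator. (A2) $f:\mathcal Y\to(-\infty,\infty]$ is proper, lower semicontinuous and strongly convex with constant $c_0>0$, i.e. $f(ty_1+(1-t)y_2)+c_0t(1-t)\|y_1-y_2\|^2\le tf(y_1)+(1-t)f(y_2)$ for all $y_1,y_2\in\mathcal Y$, $t\in[0,1]$. (A3) $W:\mathscr D(W)\subset\mathcal X\to\mathcal Y$ is a densely defined closed linear operator with domain $\mathscr D(W)$. (A4) There is $c_1>0$ with $\|Ax\|^2+\|Wx\|^2\ge c_1\|x\|^2$ for all $x\in\mathscr D(W)$. $\mathscr D(f)=\{y: f(y)<\infty\}$. The data $b\in\mathcal H$ is called consistent if $b=Ax$ for some $x\in\mathscr D(W)$ with $Wx\in\mathscr D(f)$. *)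

From Stdlib Require Import Reals.
Open Scope R_scope.

Record Hilbert := {
  hcar :> Type;
  hzero : hcar;
  hadd : hcar -> hcar -> hcar;
  hopp : hcar -> hcar;
  hscal : R -> hcar -> hcar;
  hinner : hcar -> hcar -> R;
  hadd_assoc : forall x y z, hadd x (hadd y z) = hadd (hadd x y) z;
  hadd_comm : forall x y, hadd x y = hadd y x;
  hadd_zero : forall x, hadd hzero x = x;
  hadd_opp : forall x, hadd (hopp x) x = hzero;
  hscal_assoc : forall a b x, hscal a (hscal b x) = hscal (a * b) x;
  hscal_one : forall x, hscal 1 x = x;
  hscal_distr_v : forall a x y, hscal a (hadd x y) = hadd (hscal a x) (hscal a y);
  hscal_distr_s : forall a b x, hscal (a + b) x = hadd (hscal a x) (hscal b x);
  hinner_sym : forall x y, hinner x y = hinner y x;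
  hinner_add : forall x y z, hinner (hadd x y) z = hinner x z + hinner y z;
  hinner_scal : forall a x y, hinner (hscal a x) y = a * hinner x y;
  hinner_pos : forall x, 0 <= hinner x x;
  hinner_def : forall x, hinner x x = 0 -> x = hzero;
  hcomplete : forall u : nat -> hcar,
    (forall eps, 0 < eps -> exists N, forall m n, (N <= m)%nat -> (N <= n)%nat ->
        sqrt (hinner (hadd (u m) (hopp (u n))) (hadd (u m) (hopp (u n)))) < eps) ->
    exists l, forall eps, 0 < eps -> exists N, forall n, (N <= n)%nat ->
        sqrt (hinner (hadd (u n) (hopp l)) (hadd (u n) (hopp l))) < eps
}.

Arguments hzero {h}.
Arguments hadd {h}.
Arguments hopp {h}.
Arguments hscal {h}.
Arguments hinner {h}.

Definition hnorm {X : Hilbert} (x : X) : R := sqrt (hinner x x).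
Definition hsub {X : Hilbert} (x y : X) : X := hadd x (hopp y).

Definition hconv {X : Hilbert} (u : nat -> X) (l : X) : Prop :=
  forall eps, 0 < eps -> exists N, forall n, (N <= n)%nat -> hnorm (hsub (u n) l) < eps.

Inductive ereal := Fin (r : R) | PInf.

Definition ele (a b : ereal) : Prop :=
  match a, b with
  | Fin x, Fin y => x <= y
  | _, PInf => True
  | PInf, Fin _ => False
  end.

Definition dom {Y : Hilbert} (f : Y -> ereal) (y : Y) : Prop := f y <> PInf.

Definition proper {Y : Hilbert} (f : Y -> ereal) : Prop := exists y, dom f y.

Definition lsc {Y : Hilbert} (f : Y -> ereal) : Prop :=
  forall (a : R) (u : nat -> Y) (y : Y),
    (forall n, ele (f (u n)) (Fin a)) -> hconv u y -> ele (f y) (Fin a).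

(** Strong convexity with constant c0 (for an extended-valued f):
    f(t y1 + (1-t) y2) + c0 t(1-t)||y1-y2||^2 <= t f(y1) + (1-t) f(y2)
    for all y1 y2 and t in [0,1], with the conventions r + oo = oo, 0*oo = 0.
    This unfolds to the statement below (the inequality is trivial when
    y1 or y2 is outside dom f, and forces the combination into dom f otherwise). *)
Definition strongly_convex {Y : Hilbert} (f : Y -> ereal) (c0 : R) : Prop :=
  forall (y1 y2 : Y) (t : R), 0 <= t <= 1 -> forall r1 r2,
    f y1 = Fin r1 -> f y2 = Fin r2 ->
    exists r, f (hadd (hscal t y1) (hscal (1 - t) y2)) = Fin r /\
      r + c0 * t * (1 - t) * (hnorm (hsub y1 y2)) ^ 2 <= t * r1 + (1 - t) * r2.

Definition bounded_linear {X H : Hilbert} (A : X -> H) : Prop :=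
  (forall x y, A (hadd x y) = hadd (A x) (A y)) /\
  (forall a x, A (hscal a x) = hscal a (A x)) /\
  (exists C, forall x, hnorm (A x) <= C * hnorm x).

(** Densely defined closed linear operator W : D(W) subset X -> Y.
    The domain is the predicate D; values of W outside D are irrelevant. *)
Definition linear_subspace {X : Hilbert} (D : X -> Prop) : Prop :=
  D hzero /\ (forall x y, D x -> D y -> D (hadd x y)) /\
  (forall a x, D x -> D (hscal a x)).

Definition dense {X : Hilbert} (D : X -> Prop) : Prop :=
  forall x eps, 0 < eps -> exists d, D d /\ hnorm (hsub x d) < eps.

Definition densely_defined_closed_linear {X Y : Hilbert}
  (D : X -> Prop) (W : X -> Y) : Prop :=
  linear_subspace D /\
  (forall x y, D x -> D y -> W (hadd x y) = hadd (W x) (W y)) /\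
  (forall a x, D x -> W (hscal a x) = hscal a (W x)) /\
  dense D /\
  (forall (u : nat -> X) x y, (forall n, D (u n)) -> hconv u x ->
     hconv (fun n => W (u n)) y -> D x /\ W x = y).

Definition consistent {X Y H : Hilbert} (A : X -> H) (D : X -> Prop) (W : X -> Y)
  (f : Y -> ereal) (b : H) : Prop :=
  exists x, D x /\ A x = b /\ dom f (W x).

Definition is_solution {X Y H : Hilbert} (A : X -> H) (D : X -> Prop) (W : X -> Y)
  (f : Y -> ereal) (b : H) (xs : X) : Prop :=
  D xs /\ A xs = b /\ (forall x, D x -> A x = b -> ele (f (W xs)) (f (W x))).

(* Strong convexity and lower semicontinuity make [f] bounded below, so the
   infimum [m] of [f (W x)] over the feasible set [{x in D(W) | A x = b}] is
   finite.  Since the feasible set is affine, strong convexity at midpoints gives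
     c0/4 |W x - W x'|^2 <= (f (W x) + f (W x')) / 2 - m,
   and (A4) applied to [x - x'], on which [A] vanishes, controls |x - x'| by
   |W x - W x'|.  Hence minimizing sequences are Cauchy in the graph norm of [W];
   closedness of [W], continuity of [A] and lower semicontinuity of [f] make the
   limit a minimizer, and the same inequality with both values equal to [m] gives
   uniqueness. *)

From Stdlib Require Import Reals ClassicalEpsilon Lra Psatz.
Open Scope R_scope.

Section hilbert_algebra.
Context {X : Hilbert}.
Implicit Types (x y z : X) (a t : R).

Lemma hadd_zero_r x : hadd x hzero = x.
Proof. rewrite hadd_comm; apply hadd_zero. Qed.

Lemma hadd_opp_r x : hadd x (hopp x) = hzero.
Proof. rewrite hadd_comm; apply hadd_opp. Qed.

Lemma hadd_cancel_l z x y : hadd z x = hadd z y -> x = y.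
Proof.
  intro E.
  rewrite <- (hadd_zero _ x), <- (hadd_zero _ y), <- (hadd_opp _ z), <- !hadd_assoc, E.
  reflexivity.
Qed.

Lemma hscal_0 x : hscal 0 x = hzero.
Proof.
  apply (hadd_cancel_l (hscal 0 x)).
  rewrite <- hscal_distr_s, hadd_zero_r, Rplus_0_r; reflexivity.
Qed.

Lemma hopp_scal x : hopp x = hscal (-1) x.
Proof.
  apply (hadd_cancel_l x).
  rewrite hadd_opp_r, <- (hscal_one _ x) at 1.
  rewrite <- hscal_distr_s, Rplus_opp_r, hscal_0; reflexivity.
Qed.

Lemma hinner_zero_l y : hinner hzero y = 0.
Proof. rewrite <- (hscal_0 hzero), hinner_scal; ring. Qed.

Lemma hinner_scal_r a x y : hinner x (hscal a y) = a * hinner x y.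
Proof. rewrite hinner_sym, hinner_scal, hinner_sym; reflexivity. Qed.

Lemma hnorm_ge0 x : 0 <= hnorm x.
Proof. apply sqrt_pos. Qed.

Lemma hnorm_zero : hnorm (@hzero X) = 0.
Proof. unfold hnorm; rewrite hinner_zero_l; apply sqrt_0. Qed.

Lemma hnorm_eq0 x : hnorm x = 0 -> x = hzero.
Proof. intro E; apply hinner_def, sqrt_eq_0; [apply hinner_pos | exact E]. Qed.

Lemma hnorm_scal a x : hnorm (hscal a x) = Rabs a * hnorm x.
Proof.
  unfold hnorm; rewrite hinner_scal, hinner_scal_r, <- Rmult_assoc, sqrt_mult_alt.
  - rewrite <- sqrt_Rsqr_abs; reflexivity.
  - nra.
Qed.

Lemma hsub_self x : hsub x x = hzero.
Proof. apply hadd_opp_r. Qed.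

Lemma hsub_eq0 x y : hsub x y = hzero -> x = y.
Proof.
  intro E; apply (hadd_cancel_l (hopp y)).
  unfold hsub in E; rewrite hadd_comm, E, hadd_opp; reflexivity.
Qed.

Lemma hcomb_same t x : hadd (hscal t x) (hscal (1 - t) x) = x.
Proof. rewrite <- hscal_distr_s, Rplus_minus; apply hscal_one. Qed.

Lemma hcomb_sub t y z : hsub (hadd (hscal t y) (hscal (1 - t) z)) z = hscal t (hsub y z).
Proof.
  unfold hsub; rewrite hscal_distr_v, !hopp_scal, hscal_assoc, <- hadd_assoc, <- hscal_distr_s.
  do 2 f_equal; ring.
Qed.

End hilbert_algebra.

Section linear_on_subspace.
Context {X Y : Hilbert} (P : X -> Prop) (L : X -> Y).
Hypothesis L_add : forall x y, P x -> P y -> L (hadd x y) = hadd (L x) (L y).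
Hypothesis L_scal : forall a x, P x -> L (hscal a x) = hscal a (L x).
Hypothesis P_scal : forall a x, P x -> P (hscal a x).

Lemma linear_sub x y : P x -> P y -> L (hsub x y) = hsub (L x) (L y).
Proof. intros Px Py; unfold hsub; rewrite !hopp_scal, L_add, L_scal; auto. Qed.

Lemma linear_comb a c x y :
  P x -> P y -> L (hadd (hscal a x) (hscal c y)) = hadd (hscal a (L x)) (hscal c (L y)).
Proof. intros Px Py; rewrite L_add, !L_scal; auto. Qed.

End linear_on_subspace.

Lemma inv_succ_lt eps : 0 < eps -> exists N, forall n, (N <= n)%nat -> / INR (S n) < eps.
Proof.
  intro He; destruct (INR_unbounded (/ eps)) as [N HN]; exists N; intros n Hn.
  apply le_INR in Hn; rewrite S_INR.
  assert (Hpos : 0 < INR n + 1) by (pose proof (pos_INR n); lra).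
  apply (Rmult_lt_reg_l (INR n + 1)); [exact Hpos|].
  rewrite Rinv_r by lra.
  assert (/ eps * eps = 1) by (field; lra).
  nra.
Qed.

Lemma inf_approx (P : R -> Prop) :
  (exists r, P r) -> (exists L, forall r, P r -> L <= r) ->
  exists m, (forall r, P r -> m <= r) /\
    (forall eps, 0 < eps -> exists r, P r /\ r < m + eps).
Proof.
  intros [r0 Hr0] [L HL].
  destruct (completeness (fun r => P (- r))) as [M [HM1 HM2]].
  - exists (- L); intros r Hr; specialize (HL _ Hr); lra.
  - exists (- r0); rewrite Ropp_involutive; exact Hr0.
  - exists (- M); split.
    + intros r Hr; enough (- r <= M) by lra.
      apply HM1; rewrite Ropp_involutive; exact Hr.
    + intros eps He; apply NNPP; intro Hno.
      enough (M <= M - eps) by lra.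
      apply HM2; intros r Hr; apply Rnot_lt_le; intro Hlt.
      apply Hno; exists (- r); split; [exact Hr | lra].
Qed.

Section convergence.
Context {X : Hilbert}.

Lemma hconv_const_eq (a l : X) : hconv (fun _ => a) l -> l = a.
Proof.
  intro Hc; symmetry; apply hsub_eq0, hnorm_eq0.
  pose proof (hnorm_ge0 (hsub a l)).
  apply Rle_antisym; [|assumption]; apply Rnot_lt_le; intro Hpos.
  destruct (Hc _ Hpos) as [N HN]; specialize (HN N (le_n N)); lra.
Qed.

Lemma hconv_shift (u : nat -> X) l N : hconv u l -> hconv (fun k => u (N + k)%nat) l.
Proof.
  intros Hc eps He; destruct (Hc eps He) as [M HM]; exists M; intros n Hn; apply HM; lia.
Qed.

Lemma hconv_of_inv_succ (u : nat -> X) l :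
  (forall n, hnorm (hsub (u n) l) < / INR (S n)) -> hconv u l.
Proof.
  intros Hu eps He; destruct (inv_succ_lt eps He) as [N HN]; exists N; intros n Hn.
  specialize (Hu n); specialize (HN n Hn); lra.
Qed.

Lemma hconv_of_sq_bound (u : nat -> X) K : 0 < K ->
  (forall m n, hnorm (hsub (u m) (u n)) ^ 2 <= K * (/ INR (S m) + / INR (S n))) ->
  exists l, hconv u l.
Proof.
  intros HK Hb; apply hcomplete; intros eps He.
  destruct (inv_succ_lt (eps ^ 2 / (2 * K))) as [N HN].
  { apply Rdiv_lt_0_compat; nra. }
  exists N; intros m n Hm Hn.
  pose proof (HN m Hm); pose proof (HN n Hn); specialize (Hb m n).
  pose proof (hnorm_ge0 (hsub (u m) (u n))).
  assert (K * (/ INR (S m) + / INR (S n)) < eps ^ 2).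
  { replace (eps ^ 2) with (K * (2 * (eps ^ 2 / (2 * K)))) by (field; lra). nra. }
  change (hnorm (hsub (u m) (u n)) < eps); nra.
Qed.

End convergence.

Lemma bounded_linear_hconv {X H : Hilbert} (A : X -> H) (u : nat -> X) x :
  bounded_linear A -> hconv u x -> hconv (fun n => A (u n)) (A x).
Proof.
  intros [A_add [A_scal [C HC]]] Hc eps He.
  set (C' := Rabs C + 1).
  assert (HC' : 0 < C') by (pose proof (Rabs_pos C); unfold C'; lra).
  destruct (Hc (eps / C')) as [N HN]; [apply Rdiv_lt_0_compat; lra|].
  exists N; intros n Hn; specialize (HN n Hn).
  rewrite <- (linear_sub (fun _ => True)) by auto.
  pose proof (HC (hsub (u n) x)); pose proof (hnorm_ge0 (hsub (u n) x)); pose proof (Rle_abs C).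
  assert (C' * hnorm (hsub (u n) x) < eps).
  { replace eps with (C' * (eps / C')) by (field; lra). nra. }
  unfold C' in *; nra.
Qed.

Lemma lsc_limit_le {Y : Hilbert} (f : Y -> ereal) (u : nat -> Y) y a :
  lsc f -> hconv u y -> (forall n, ele (f (u n)) (Fin (a + / INR (S n)))) ->
  ele (f y) (Fin a).
Proof.
  intros Hlsc Hc Hu.
  assert (Hbelow : forall eps, 0 < eps -> ele (f y) (Fin (a + eps))).
  { intros eps He; destruct (inv_succ_lt eps He) as [N HN].
    apply (Hlsc _ (fun k => u (N + k)%nat)); [|now apply hconv_shift].
    intro k; specialize (Hu (N + k)%nat); specialize (HN (N + k)%nat ltac:(lia)).
    destruct (f (u (N + k)%nat)); simpl in *; [lra | contradiction]. }
  destruct (f y) as [ry|] eqn:Ey; simpl.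
  - apply Rnot_lt_le; intro Hlt.
    specialize (Hbelow ((ry - a) / 2) ltac:(lra)); simpl in Hbelow; lra.
  - exact (Hbelow 1 Rlt_0_1).
Qed.

Lemma short_descent_weight c0 eps d s :
  0 < c0 -> 0 < eps -> 0 <= d -> 2 + 8 / (c0 * eps ^ 2) < s ->
  exists t, 0 <= t <= 1 /\ t * d < eps /\ 1 <= t * s + c0 * t * (1 - t) * d ^ 2.
Proof.
  intros Hc He Hd Hs.
  assert (Hce : 0 < c0 * eps ^ 2) by (apply Rmult_lt_0_compat; [lra | apply pow_lt; lra]).
  assert (Hs8 : 8 < c0 * eps ^ 2 * s).
  { assert (0 < 8 / (c0 * eps ^ 2)) by (apply Rdiv_lt_0_compat; lra).
    assert (c0 * eps ^ 2 * (8 / (c0 * eps ^ 2)) = 8) by (field; lra).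
    nra. }
  destruct (Rlt_or_le d (2 * eps)) as [Hnear | Hfar].
  - exists (1 / 2); repeat split; try lra.
    assert (0 <= c0 * d ^ 2) by (apply Rmult_le_pos; [lra | apply pow2_ge_0]).
    assert (0 <= 1 / 2 * (1 - 1 / 2)) by lra.
    assert (0 <= 8 / (c0 * eps ^ 2)) by (apply Rlt_le, Rdiv_lt_0_compat; lra).
    nra.
  - set (t := eps / (2 * d)).
    assert (Htd : t * d = eps / 2) by (unfold t; field; lra).
    assert (Ht0 : 0 < t) by (unfold t; apply Rdiv_lt_0_compat; lra).
    assert (Ht1 : t <= 1 / 4).
    { apply (Rmult_le_reg_r d); [lra|]. rewrite Htd. lra. }
    exists t; repeat split; try lra.
    (* Either [t s] or [c0 t (1-t) d^2 >= c0 eps d / 4] is at least 1. *)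
    assert (Hquad : c0 * eps * d / 4 <= c0 * t * (1 - t) * d ^ 2).
    { replace (c0 * t * (1 - t) * d ^ 2) with (c0 * (t * d) * (1 - t) * d) by ring.
      rewrite Htd. assert (0 < c0 * eps * d) by (apply Rmult_lt_0_compat; nra). nra. }
    destruct (Rle_or_lt d (eps * s / 2)) as [Hsmall | Hlarge].
    + assert (1 <= t * s) by (apply (Rmult_le_reg_r d); [lra|]; nra).
      assert (0 <= c0 * eps * d) by (apply Rmult_le_pos; nra). nra.
    + assert (0 < c0 * eps) by nra.
      assert (0 <= t * s) by nra. nra.
Qed.

Section strongly_convex_bounded_below.
Context {Y : Hilbert} (f : Y -> ereal) (c0 : R).
Hypothesis c0_pos : 0 < c0.
Hypothesis f_sc : strongly_convex f c0.

Lemma strongly_convex_descent y y0 r r0 t :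
  f y = Fin r -> f y0 = Fin r0 -> 0 <= t <= 1 ->
  exists z, hnorm (hsub z y0) = t * hnorm (hsub y y0) /\
    ele (f z) (Fin (r0 - (t * (r0 - r) + c0 * t * (1 - t) * hnorm (hsub y y0) ^ 2))).
Proof.
  intros Hy Hy0 Ht; destruct (f_sc y y0 t Ht r r0 Hy Hy0) as [rz [Hz Hrz]].
  exists (hadd (hscal t y) (hscal (1 - t) y0)); split.
  - rewrite hcomb_sub, hnorm_scal, Rabs_right by lra; reflexivity.
  - rewrite Hz; simpl; lra.
Qed.

(* Move from [y0] a short way towards a point of very low value. *)
Lemma strongly_convex_unbounded_near y0 r0 :
  f y0 = Fin r0 -> ~ (exists L, forall y r, f y = Fin r -> L <= r) ->
  forall eps, 0 < eps -> exists z, hnorm (hsub z y0) < eps /\ ele (f z) (Fin (r0 - 1)).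
Proof.
  intros Hy0 Hunb eps He.
  assert (Hlow : exists y r, f y = Fin r /\ r < r0 - 2 - 8 / (c0 * eps ^ 2)).
  { apply NNPP; intro Hno; apply Hunb; exists (r0 - 2 - 8 / (c0 * eps ^ 2)).
    intros y r Hyr; apply Rnot_lt_le; intro Hlt; apply Hno; exists y, r; auto. }
  destruct Hlow as [y [r [Hyr Hlow]]].
  destruct (short_descent_weight c0 eps (hnorm (hsub y y0)) (r0 - r) c0_pos He
              (hnorm_ge0 _) ltac:(lra)) as [t [Ht [Hclose Hdrop]]].
  destruct (strongly_convex_descent y y0 r r0 t Hyr Hy0 Ht) as [z [Hdist Hval]].
  exists z; split; [lra|].
  destruct (f z); simpl in *; [lra | contradiction].
Qed.

Lemma strongly_convex_bounded_below :
  proper f -> lsc f -> exists L, forall y r, f y = Fin r -> L <= r.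
Proof.
  intros [y0 Hdom] Hlsc; unfold dom in Hdom.
  destruct (f y0) as [r0|] eqn:Hy0; [|contradiction].
  apply NNPP; intro Hunb.
  destruct (choice (fun n z => hnorm (hsub z y0) < / INR (S n) /\ ele (f z) (Fin (r0 - 1))))
    as [z Hz].
  { intro n; apply (strongly_convex_unbounded_near y0 r0 Hy0 Hunb).
    apply Rinv_0_lt_compat, lt_0_INR; lia. }
  pose proof (Hlsc (r0 - 1) z y0 (fun n => proj2 (Hz n))
                (hconv_of_inv_succ z y0 (fun n => proj1 (Hz n)))) as Hle.
  rewrite Hy0 in Hle; simpl in Hle; lra.
Qed.

End strongly_convex_bounded_below.

Section constrained_minimization.
Variables (X Y H : Hilbert) (A : X -> H) (f : Y -> ereal) (c0 c1 : R)
  (D : X -> Prop) (W : X -> Y) (b : H).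
Hypothesis A_bounded_linear : bounded_linear A.
Hypothesis f_proper : proper f.
Hypothesis f_lsc : lsc f.
Hypothesis c0_pos : 0 < c0.
Hypothesis f_sc : strongly_convex f c0.
Hypothesis D_subspace : linear_subspace D.
Hypothesis W_add : forall x y, D x -> D y -> W (hadd x y) = hadd (W x) (W y).
Hypothesis W_scal : forall a x, D x -> W (hscal a x) = hscal a (W x).
Hypothesis W_closed : forall (u : nat -> X) x y, (forall n, D (u n)) -> hconv u x ->
  hconv (fun n => W (u n)) y -> D x /\ W x = y.
Hypothesis c1_pos : 0 < c1.
Hypothesis coercive :
  forall x, D x -> hnorm (A x) ^ 2 + hnorm (W x) ^ 2 >= c1 * hnorm x ^ 2.
Hypothesis b_consistent : consistent A D W f b.

Definition feasible (x : X) : Prop := D x /\ A x = b.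

Lemma A_linear_comb a c x y :
  A (hadd (hscal a x) (hscal c y)) = hadd (hscal a (A x)) (hscal c (A y)).
Proof.
  destruct A_bounded_linear as [A_add [A_scal _]].
  apply (linear_comb (fun _ => True)); auto.
Qed.

Lemma feasible_comb t x x' :
  feasible x -> feasible x' -> feasible (hadd (hscal t x) (hscal (1 - t) x')).
Proof.
  destruct D_subspace as [_ [D_add D_scal]].
  intros [Dx Ax] [Dx' Ax']; split; [auto|].
  rewrite A_linear_comb, Ax, Ax'; apply hcomb_same.
Qed.

Lemma feasible_coercive x x' : feasible x -> feasible x' ->
  c1 * hnorm (hsub x x') ^ 2 <= hnorm (hsub (W x) (W x')) ^ 2.
Proof.
  destruct D_subspace as [_ [D_add D_scal]]; destruct A_bounded_linear as [A_add [A_scal _]].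
  intros [Dx Ax] [Dx' Ax'].
  assert (Dsub : D (hsub x x')) by (unfold hsub; rewrite hopp_scal; auto).
  pose proof (coercive _ Dsub) as Hc.
  rewrite (linear_sub (fun _ => True)), Ax, Ax', hsub_self, hnorm_zero,
    (linear_sub D) in Hc by auto.
  lra.
Qed.

Section infimum.
Variable m : R.
Hypothesis m_lower : forall x r, feasible x -> f (W x) = Fin r -> m <= r.

(* Strong convexity at the midpoint, which is again feasible and so has value at least [m]. *)
Lemma midpoint_gap x x' rx rx' :
  feasible x -> feasible x' -> f (W x) = Fin rx -> f (W x') = Fin rx' ->
  c0 / 4 * hnorm (hsub (W x) (W x')) ^ 2 <= (rx + rx') / 2 - m.
Proof.
  destruct D_subspace as [_ [D_add D_scal]].
  intros Fx Fx' Hx Hx'.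
  destruct (f_sc (W x) (W x') (1 / 2) ltac:(lra) rx rx' Hx Hx') as [rz [Hz Hrz]].
  rewrite <- (linear_comb D) in Hz by (apply Fx || apply Fx' || auto).
  pose proof (m_lower _ _ (feasible_comb (1 / 2) x x' Fx Fx') Hz).
  lra.
Qed.

Lemma minimizer_unique x x' :
  feasible x -> feasible x' -> f (W x) = Fin m -> f (W x') = Fin m -> x = x'.
Proof.
  intros Fx Fx' Hx Hx'.
  pose proof (midpoint_gap x x' m m Fx Fx' Hx Hx').
  pose proof (feasible_coercive x x' Fx Fx').
  pose proof (hnorm_ge0 (hsub x x')).
  assert (HW : hnorm (hsub (W x) (W x')) ^ 2 <= 0).
  { apply (Rmult_le_reg_l (c0 / 4)); lra. }
  assert (Hx2 : hnorm (hsub x x') ^ 2 <= 0).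
  { apply (Rmult_le_reg_l c1); lra. }
  apply hsub_eq0, hnorm_eq0; nra.
Qed.

Hypothesis m_approx :
  forall eps, 0 < eps -> exists x r, feasible x /\ f (W x) = Fin r /\ r < m + eps.

Lemma minimizing_sequence : exists (x : nat -> X) (r : nat -> R), forall n,
  feasible (x n) /\ f (W (x n)) = Fin (r n) /\ r n < m + / INR (S n).
Proof.
  destruct (choice (fun n (p : X * R) =>
              feasible (fst p) /\ f (W (fst p)) = Fin (snd p) /\ snd p < m + / INR (S n)))
    as [p Hp].
  { intro n; destruct (m_approx (/ INR (S n))) as [x [r Hxr]].
    - apply Rinv_0_lt_compat, lt_0_INR; lia.
    - exists (x, r); exact Hxr. }
  exists (fun n => fst (p n)), (fun n => snd (p n)); exact Hp.
Qed.

Lemma minimizer_exists : exists xs, feasible xs /\ f (W xs) = Fin m.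
Proof.
  destruct minimizing_sequence as [x [r Hx]].
  assert (HW : forall n k,
    hnorm (hsub (W (x n)) (W (x k))) ^ 2 <= 2 / c0 * (/ INR (S n) + / INR (S k))).
  { intros n k; destruct (Hx n) as [Fn [Wn Rn]], (Hx k) as [Fk [Wk Rk]].
    pose proof (midpoint_gap _ _ _ _ Fn Fk Wn Wk).
    set (e := / INR (S n) + / INR (S k)) in *.
    apply (Rmult_le_reg_l (c0 / 4)); [lra|].
    replace (c0 / 4 * (2 / c0 * e)) with (e / 2) by (field; lra).
    unfold e; lra. }
  assert (HX : forall n k,
    hnorm (hsub (x n) (x k)) ^ 2 <= 2 / (c0 * c1) * (/ INR (S n) + / INR (S k))).
  { intros n k; pose proof (feasible_coercive _ _ (proj1 (Hx n)) (proj1 (Hx k))).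
    specialize (HW n k); set (e := / INR (S n) + / INR (S k)) in *.
    apply (Rmult_le_reg_l c1); [lra|].
    replace (c1 * (2 / (c0 * c1) * e)) with (2 / c0 * e) by (field; lra).
    lra. }
  destruct (hconv_of_sq_bound x (2 / (c0 * c1))) as [xs Hxs]; [|exact HX|].
  { apply Rdiv_lt_0_compat; [lra | apply Rmult_lt_0_compat; lra]. }
  destruct (hconv_of_sq_bound (fun n => W (x n)) (2 / c0)) as [ys Hys]; [|exact HW|].
  { apply Rdiv_lt_0_compat; lra. }
  destruct (W_closed x xs ys (fun n => proj1 (proj1 (Hx n))) Hxs Hys) as [Dxs <-].
  assert (Axs : A xs = b).
  { apply hconv_const_eq.
    intros eps He; destruct (bounded_linear_hconv A x xs A_bounded_linear Hxs eps He) as [N HN].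
    exists N; intros n Hn; rewrite <- (proj2 (proj1 (Hx n))); exact (HN n Hn). }
  exists xs; split; [split; assumption|].
  assert (Hle : ele (f (W xs)) (Fin m)).
  { apply (lsc_limit_le f _ _ _ f_lsc Hys); intro n.
    destruct (Hx n) as [_ [-> Rn]]; exact (Rlt_le _ _ Rn). }
  destruct (f (W xs)) as [rs|] eqn:Hrs; [|contradiction].
  pose proof (m_lower xs rs (conj Dxs Axs) Hrs); simpl in Hle.
  f_equal; lra.
Qed.

Lemma minimizer_is_solution xs :
  feasible xs -> f (W xs) = Fin m -> is_solution A D W f b xs.
Proof.
  intros [Dxs Axs] Hxs; split; [|split]; auto.
  intros x Dx Ax; rewrite Hxs.
  destruct (f (W x)) as [r|] eqn:Hr; simpl; [|trivial].
  exact (m_lower x r (conj Dx Ax) Hr).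
Qed.

Lemma solution_value xs z :
  feasible xs -> f (W xs) = Fin m -> is_solution A D W f b z -> f (W z) = Fin m.
Proof.
  intros [Dxs Axs] Hxs [Dz [Az Hz]]; specialize (Hz xs Dxs Axs).
  rewrite Hxs in Hz; destruct (f (W z)) as [r|] eqn:Hr; [|contradiction].
  pose proof (m_lower z r (conj Dz Az) Hr); simpl in Hz.
  f_equal; lra.
Qed.

End infimum.

Lemma feasible_infimum : exists m,
  (forall x r, feasible x -> f (W x) = Fin r -> m <= r) /\
  (forall eps, 0 < eps -> exists x r, feasible x /\ f (W x) = Fin r /\ r < m + eps).
Proof.
  destruct (inf_approx (fun r => exists x, feasible x /\ f (W x) = Fin r))
    as [m [m_lower m_approx]].
  - destruct b_consistent as [x0 [Dx0 [Ax0 Hdom]]]; unfold dom in Hdom.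
    destruct (f (W x0)) as [r0|] eqn:Hr0; [|contradiction].
    exists r0, x0; split; [split|]; assumption.
  - destruct (strongly_convex_bounded_below f c0 c0_pos f_sc f_proper f_lsc) as [L HL].
    exists L; intros r [x [_ Hx]]; exact (HL _ _ Hx).
  - exists m; split.
    + intros x r Fx Hx; apply m_lower; exists x; auto.
    + intros eps He; destruct (m_approx eps He) as [r [[x [Fx Hx]] Hr]]; exists x, r; auto.
Qed.

Lemma unique_solution_exists : exists xs, is_solution A D W f b xs /\
  (forall x, is_solution A D W f b x -> x = xs) /\ dom f (W xs).
Proof.
  destruct feasible_infimum as [m [m_lower m_approx]].
  destruct (minimizer_exists m m_lower m_approx) as [xs [Fxs Hxs]].
  exists xs; split; [|split].
  - exact (minimizer_is_solution m m_lower xs Fxs Hxs).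
  - intros z Hz; pose proof (solution_value m m_lower xs z Fxs Hxs Hz) as Hzm.
    destruct Hz as [Dz [Az _]].
    exact (minimizer_unique m m_lower z xs (conj Dz Az) Fxs Hzm Hxs).
  - unfold dom; rewrite Hxs; discriminate.
Qed.

End constrained_minimization.

Theorem theorem2p1 (X Y H : Hilbert) (A : X -> H) (f : Y -> ereal) (c0 : R)
  (D : X -> Prop) (W : X -> Y) (c1 : R) (b : H)
  (HA1 : bounded_linear A)
  (HA2 : proper f /\ lsc f /\ 0 < c0 /\ strongly_convex f c0)
  (HA3 : densely_defined_closed_linear D W)
  (HA4 : 0 < c1 /\ forall x, D x -> (hnorm (A x)) ^ 2 + (hnorm (W x)) ^ 2 >= c1 * (hnorm x) ^ 2)
  (Hb : consistent A D W f b) :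
  exists xs, is_solution A D W f b xs /\
    (forall x, is_solution A D W f b x -> x = xs) /\
    dom f (W xs).
Proof.
  destruct HA2 as [f_proper [f_lsc [c0_pos f_sc]]].
  destruct HA3 as [D_subspace [W_add [W_scal [_ W_closed]]]].
  destruct HA4 as [c1_pos coercive].
  exact (unique_solution_exists X Y H A f c0 c1 D W b HA1 f_proper f_lsc c0_pos f_sc
           D_subspace W_add W_scal W_closed c1_pos coercive Hb).
Qed.
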